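(* Let $\mathcal{G}=(G,\lambda)$ be a simple temporal clique, $G=(V,E)$, and let $\mathcal{T}^-=(V,E^-_T)$ be obtained by the forward construction. Then the forward fireworks cover $S^-_T=\{\{u,v\}\in E:(u,v)\in E^-_T\}\cup\{\{u,v\}\in E: u \text{ is an emitter}\}$ is a temporal spanner of $\mathcal{G}$.
   Context: A simple temporal clique is a pair $\mathcal{G}=(G,\lambda)$ where $G=(V,E)$ is the complete graph on a finite vertex set $V$ and $\lambda:E\to\mathbb{N}$ assigns to each edge a single integer label such that any two distinct edges sharing an endpoint have different labels; the label of an arc $(x,y)$ is $\lambda(\{x,y\})$. A journey from $x$ to $y$ is a sequence of vertices $x=u_0,\dots,u_k=y$ ($k\ge1$) with $\lambda(\{u_{i-1},u_i\})<\lambda(\{u_i,u_{i+1}\})$ for $1\le i<k$. A set $E'\subseteq E$ is a temporal spanner of $\mathcal{G}$ if for every ordered pair of distinct vertices $x,y$ there is a journey from $x$ to $y$ using only edges of $E'$. For a vertex $v$, $e^-(v)$ is the edge incident to $v$ with smallest label. Forward construction: let $E^-$ be the set of arcs $(u,v)$ with $\{u,v\}=e^-(v)$, except that if $e^-(u)=e^-(v)=\{u,v\}$ only one of the two arcs $(u,v),(v,u)$ is included (arbitrarily). Initialize $E^-_T:=E^-$. For every vertex $v$ of out-degree at least $2$ in $(V,E^-)$, let $(v,u_1),\dots,(v,u_\ell)$ be its out-arcs in $E^-$, where $(v,u_\ell)$ has the largest label; for each $i<\ell$, if $u_i$ has out-degree $0$ in $(V,E^-)$, replace $(v,u_i)$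 by $(u_i,v)$ in $E^-_T$, and otherwise remove $(v,u_i)$ from $E^-_T$. Set $\mathcal{T}^-=(V,E^-_T)$. An emitter is a vertex of out-degree $0$ in $\mathcal{T}^-$. *)

From mathcomp Require Import all_boot.
Set Implicit Arguments. Unset Strict Implicit. Unset Printing Implicit Defensive.

(* A simple temporal clique on the vertex set V (a finType): the complete graph
   whose edge {x,y} (x != y) carries label lam x y = lam y x.  Labels on the
   diagonal are irrelevant. *)
Definition symmetric_labels (V : finType) (lam : V -> V -> nat) :=
  forall x y : V, lam x y = lam y x.

Definition proper_labels (V : finType) (lam : V -> V -> nat) :=
  forall x y z : V, x != y -> x != z -> y != z -> lam x y != lam x z.

Section Forward.
Variables (V : finType) (lam : V -> V -> nat).

Definition emin (v u : V) : bool :=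
  (u != v) && [forall w, (w != v) ==> (lam v u <= lam v w)].

(* pick : the arbitrary choice of which arc to keep when e^-(u) = e^-(v) = {u,v} *)
Variable pick : V -> V -> bool.

Definition Eminus (u v : V) : bool := emin v u && (emin u v ==> pick u v).

Definition outdegE (v : V) : nat := #|[set w | Eminus v w]|.

Definition maxout (v u : V) : bool :=
  [forall w, Eminus v w ==> (lam v w <= lam v u)].

Definition ETarc (a b : V) : bool :=
  (Eminus a b && ((outdegE a < 2) || maxout a b))
  || (Eminus b a && (2 <= outdegE b) && ~~ maxout b a && (outdegE a == 0)).

Definition emitter (v : V) : bool := [forall w, ~~ ETarc v w].

Definition fireworks (x y : V) : bool :=
  (x != y) && [|| ETarc x y, ETarc y x, emitter x | emitter y].

End Forward.

(* journey from x to y using only edges in Es (symmetric edge predicate):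
   vertices x = u_0, u_1, ..., u_k = y with k >= 1, each {u_(i-1),u_i} in Es,
   labels strictly increasing along the walk *)
Definition journey (V : finType) (lam : V -> V -> nat) (Es : V -> V -> bool)
  (x y : V) : Prop :=
  exists p : seq V,
    [/\ p != [::], last x p = y,
        all (fun e => Es e.1 e.2) (zip (x :: p) p)
      & sorted ltn (map (fun e => lam e.1 e.2) (zip (x :: p) p))].

Definition temporal_spanner (V : finType) (lam : V -> V -> nat)
  (Es : V -> V -> bool) : Prop :=
  (forall x y, Es x y -> x != y) /\
  forall x y : V, x != y -> journey lam Es x y.

From Pilot Require Import Defs.
From mathcomp Require Import all_boot.
From mathcomp Require Import zify.
Set Implicit Arguments. Unset Strict Implicit. Unset Printing Implicit Defensive.

(* In T^- every arc (a,b) followed by an arc (b,c) has a larger label, and an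
   arc (a,b) into an emitter b has a smaller label than every other edge at b.
   So, starting from x, follow out-arcs of T^- (labels strictly increase, hence
   this stops) until reaching y or an emitter e; in the latter case finish with
   the edge {e,y}, which belongs to S^-_T because e is an emitter. *)

Section Journeys.
Variables (V : finType) (lam : V -> V -> nat).

(* Labels increase along a journey, so a journey in [label_above t Es] is just
   a journey in [Es] whose first label is at least [t]. *)
Definition label_above (t : nat) (Es : V -> V -> bool) (c d : V) : bool :=
  Es c d && (t <= lam c d).

Lemma journey_sub (Es Es' : V -> V -> bool) x y :
  (forall c d, Es c d -> Es' c d) -> journey lam Es x y -> journey lam Es' x y.
Proof.
move=> sub [p [p_nil p_last /allP p_Es p_sorted]]; exists p; split=> //.
by apply/allP=> e /p_Es; apply: sub.
Qed.

Lemma journey_edge (Es : V -> V -> bool) x y : Es x y -> journey lam Es x y.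
Proof. by move=> xy; exists [:: y]; rewrite /= xy. Qed.

Lemma journey_cons (Es : V -> V -> bool) t x b y :
  Es x b -> t <= lam x b ->
  journey lam (label_above (lam x b).+1 Es) b y ->
  journey lam (label_above t Es) x y.
Proof.
move=> xb t_xb [[|c p] [//= _ p_last p_above p_sorted]].
have weaken e : label_above (lam x b).+1 Es e.1 e.2 -> label_above t Es e.1 e.2.
  by rewrite /label_above => /andP[-> /=]; lia.
move: p_above p_sorted => /= /andP[bc p_above] p_sorted.
exists [:: b, c & p]; split=> //=.
- by rewrite {1}/label_above xb t_xb (weaken (b, c)) //= (sub_all weaken).
- by case/andP: bc => _ ->.
Qed.

End Journeys.

Section ForwardConstruction.
Variables (V : finType) (lam : V -> V -> nat) (pick : V -> V -> bool).
Hypothesis Hsym : symmetric_labels lam.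
Hypothesis Hprop : proper_labels lam.
Hypothesis Hpick : forall u v : V, u != v -> emin lam v u -> emin lam u v ->
  pick u v (+) pick v u.

Local Notation emin := (emin lam).
Local Notation Eminus := (Eminus lam pick).
Local Notation outdegE := (outdegE lam pick).
Local Notation maxout := (maxout lam pick).
Local Notation ETarc := (ETarc lam pick).
Local Notation emitter := (emitter lam pick).
Local Notation fireworks := (fireworks lam pick).

Lemma emin_neq v u : emin v u -> u != v.
Proof. by case/andP. Qed.

Lemma emin_ltn v u w : emin v u -> w != v -> w != u -> lam v u < lam v w.
Proof.
case/andP=> uv /forallP u_min wv wu.
have := u_min w; rewrite wv /= ltn_neqAle => ->; rewrite andbT.
by apply: Hprop; rewrite // eq_sym.
Qed.

Lemma Eminus_neq a b : Eminus a b -> a != b.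
Proof. by case/andP=> /emin_neq. Qed.

Lemma ETarc_neq a b : ETarc a b -> a != b.
Proof.
case/orP=> [/andP[/Eminus_neq //] | /andP[/andP[/andP[/Eminus_neq]]]].
by rewrite eq_sym.
Qed.

Lemma Eminus_not_emitter v w : Eminus v w -> ~~ emitter v.
Proof.
move=> vw; have [m vm m_max] := arg_maxnP (lam v) vw.
rewrite negb_forall; apply/existsP; exists m; rewrite negbK /Defs.ETarc vm /=.
suff -> : maxout v m by rewrite orbT.
by apply/forallP=> u; apply/implyP=> /m_max.
Qed.

Lemma emitterVETarc v : emitter v \/ exists b, ETarc v b.
Proof.
have [|] := boolP (emitter v); first by left.
by rewrite negb_forall => /existsP[b /negbNE]; right; exists b.
Qed.

Lemma ETarc_asym a b : ETarc a b -> ~~ ETarc b a.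
Proof.
case/orP=> [/andP[ab ab_kept] | /andP[/andP[/andP[ba ba_out] ba_max] a_out]];
  apply/negP;
  case/orP=> [/andP[ba' ba_kept] | /andP[/andP[/andP[_ ab_out] ab_max] _]].
- have a_neq_b := Eminus_neq ab.
  case/andP: ab => a_min /implyP ab; case/andP: ba' => b_min /implyP ba.
  by have := Hpick a_neq_b a_min b_min; rewrite ab // ba.
- by move: ab_kept; rewrite ltnNge ab_out (negbTE ab_max).
- by move: ba_kept; rewrite ltnNge ba_out (negbTE ba_max).
- by move: ab_out; rewrite (eqP a_out).
Qed.

Lemma ETarc_ETarc_ltn a b c : ETarc a b -> ETarc b c -> lam a b < lam b c.
Proof.
move=> ab bc; have ca : c != a by apply: contraNneq (ETarc_asym ab) => <-.
case/orP: ab => [/andP[/andP[a_min _] _] | /andP[/andP[/andP[ba b_out] _] _]].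
  by rewrite Hsym; apply: emin_ltn; rewrite // eq_sym; apply: ETarc_neq.
case/orP: bc => [/andP[bc bc_kept] | /andP[_ b_out0]]; last first.
  by move: b_out; rewrite (eqP b_out0).
move: bc_kept; rewrite ltnNge b_out /= => /forallP/(_ a)/implyP/(_ ba) le_ba_bc.
rewrite Hsym ltn_neqAle le_ba_bc andbT.
by apply: Hprop; [exact: Eminus_neq ba | exact: Eminus_neq bc | rewrite eq_sym].
Qed.

Lemma ETarc_emitter_ltn a b c :
  ETarc a b -> emitter b -> c != a -> c != b -> lam a b < lam b c.
Proof.
move=> ab b_emit ca cb.
case/orP: ab => [/andP[/andP[a_min _] _] | /andP[/andP[/andP[ba _] _] _]].
  by rewrite Hsym; apply: emin_ltn.
by have := Eminus_not_emitter ba; rewrite b_emit.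
Qed.

Lemma fireworks_ETarc a b : ETarc a b -> fireworks a b.
Proof. by move=> ab; rewrite /Defs.fireworks ETarc_neq //= ab. Qed.

Lemma fireworks_emitter e y : emitter e -> y != e -> fireworks e y.
Proof.
by move=> e_emit ye; rewrite /Defs.fireworks eq_sym ye e_emit !orbT.
Qed.

Definition max_label : nat := \max_(e : V * V) lam e.1 e.2.

Lemma lam_le_max_label x y : lam x y <= max_label.
Proof. exact: (@leq_bigmax _ (fun e : V * V => lam e.1 e.2) (x, y)). Qed.

(* [n] is fuel: following an arc of T^- raises [t] above the current label,
   and [t] cannot pass [max_label]. *)
Lemma journey_above_fireworks n t v y :
  max_label < t + n -> y != v ->
  (forall b, ETarc v b -> t <= lam v b) -> (emitter v -> t <= lam v y) ->
  journey lam (label_above lam t fireworks) v y.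
Proof.
elim: n t v y => [|n IH] t v y bound yv t_out t_emit;
  have [v_emit | [b vb]] := emitterVETarc v;
  try by apply: journey_edge; rewrite /label_above fireworks_emitter ?t_emit.
  by have := t_out b vb; have := lam_le_max_label v b; lia.
have [fw_vb t_vb] := (fireworks_ETarc vb, t_out b vb).
case: (eqVneq y b) => [-> | yb].
  by apply: journey_edge; rewrite /label_above fw_vb t_vb.
apply: journey_cons (fw_vb) (t_vb) (IH _ _ _ _ yb _ _).
- lia.
- by move=> c; apply: ETarc_ETarc_ltn.
- by move=> b_emit; apply: ETarc_emitter_ltn.
Qed.

End ForwardConstruction.

Theorem theorem2 (V : finType) (lam : V -> V -> nat) (pick : V -> V -> bool)
  (Hsym : symmetric_labels lam) (Hprop : proper_labels lam)
  (Hpick : forall u v : V, u != v -> emin lam v u -> emin lam u v ->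
             pick u v (+) pick v u) :
  temporal_spanner lam (fireworks lam pick).
Proof.
split=> [x y /andP[] // | x y xy].
apply: (@journey_sub _ _ (label_above lam 0 (fireworks lam pick))).
  by move=> c d /andP[].
by apply: (journey_above_fireworks Hsym Hprop Hpick (n := (max_label lam).+1));
  rewrite // eq_sym.
Qed.
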